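(* Let $\mathbf{p}:[0,1]\to[0,1]^E$, $\lambda\mapsto\mathbf{p}(\lambda)$, be continuous, and set $\rho(\lambda):=\rho\big(B^T\mathrm{diag}(\mathbf{p}(\lambda))\big)$. Suppose a continuous phase transition occurs at $\lambda_c\in[0,1)$, i.e. $\mathbf{Q}(\mathbf{p}(\lambda))\to\mathbf{1}$ as $\lambda\to\lambda_c$, and there is a sequence $\lambda_n\to\lambda_c$ with $\mathbf{Q}(\mathbf{p}(\lambda_n))\neq\mathbf{1}$ for all $n$. Then $\rho(\lambda_c)\geq 1$.
   Context: $\mathcal{G}=(V,E)$ is a finite directed graph, edges written $i\to j$, $M=|E|$; $\mathcal{N}^-(j)=\{k:\,k\to j\in E\}$ is the set of predecessors of $j$. The Hashimoto matrix is $B_{i\to j,\,k\to l}=\delta_{jk}(1-\delta_{il})$, $\rho$ denotes spectral radius. For $\mathbf{p}\in[0,1]^E$ define $\mathbf{F}(\cdot;\mathbf{p}):[0,1]^E\to[0,1]^E$ componentwise: for the edge $j\to i$, $$F_{j\to i}(\mathbf{y};\mathbf{p})=\prod_{k\in\mathcal{N}^-(j)\setminus\{i\}}\big(1-p_{k\to j}+p_{k\to j}\,y_{k\to j}\big)$$ (empty product $=1$). One checks that the Jacobian at $\mathbf{1}$ is $\mathbf{F}'(\mathbf{1};\mathbf{p})=B^T\mathrm{diag}(\mathbf{p})$. $\mathbf{Q}(\mathbf{p})\in[0,1]^E$ denotes the componentwise smallest fixed point of $\mathbf{F}(\cdot;\mathbf{p})$ in $[0,1]^E$ (the limit of the iterates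 of $\mathbf{F}$ started at $\mathbf{0}$); its component for edge $j\to i$ is the message-passing probability that the cluster obtained by backtracking the edge $j\to i$ is finite. *)

From HB Require Import structures.
From mathcomp Require Import all_boot all_order all_algebra.
From mathcomp Require Import all_classical all_reals all_analysis.
From mathcomp Require Import complex.
Set Implicit Arguments. Unset Strict Implicit. Unset Printing Implicit Defensive.
Import Order.TTheory GRing.Theory Num.Theory.
Import numFieldNormedType.Exports.
Local Open Scope ring_scope.
Local Open Scope classical_set_scope.

(* A finite directed graph: vertex type V, edge set E : {set V * V};
   the pair (i, j) is the edge i -> j.  Edges are indexed by 'I_#|E|
   through enum_val. *)

Section Graph.
Variables (V : finType) (E : {set V * V}).

Definition edge (a : 'I_#|E|) : V * V := enum_val a.
Definition esrc (a : 'I_#|E|) : V := (edge a).1.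
Definition edst (a : 'I_#|E|) : V := (edge a).2.

Definition hashimoto (R : nzRingType) : 'M[R]_#|E| :=
  \matrix_(a, b) ((edst a == esrc b) && (esrc a != edst b))%:R.

Variable R : realType.

(* F(y; p) : for the edge j -> i,
   F_{j->i}(y) = prod_{k in N^-(j) \ {i}} (1 - p_{k->j} + p_{k->j} y_{k->j}),
   the product ranging over edges k -> j with k <> i. *)
Definition Fmap (p : 'I_#|E| -> R) (y : 'I_#|E| -> R) : 'I_#|E| -> R :=
  fun a => \prod_(b < #|E| | (edst b == esrc a) && (esrc b != edst a))
             (1 - p b + p b * y b).

Definition Qmp (p : 'I_#|E| -> R) : 'I_#|E| -> R :=
  fun a => lim ((fun n : nat => iter n (Fmap p) (fun _ => 0) a) @ \oo).

End Graph.

(* Spectral radius of a real square matrix: the largest modulus of its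
   complex eigenvalues (sup of the finite set of moduli; 0 for the empty
   matrix). *)
Definition spectral_radius (R : realType) (n : nat) (A : 'M[R]_n) : R :=
  sup [set r : R | exists z : R[i],
         eigenvalue (map_mx (fun x : R => (x%:C)%C) A) z
         /\ r = ComplexField.Normc.normc z].

Definition jac (V : finType) (E : {set V * V}) (R : realType)
  (p : 'I_#|E| -> R) : 'M[R]_#|E| :=
  (hashimoto E R)^T *m diag_mx (\row_a p a).

From HB Require Import structures.
From mathcomp Require Import all_boot all_order all_algebra.
From mathcomp Require Import all_classical all_reals all_analysis.
From mathcomp Require Import complex.
From mathcomp Require Import ring lra.
Set Implicit Arguments. Unset Strict Implicit. Unset Printing Implicit Defensive.
Import Order.TTheory GRing.Theory Num.Theory.
Import numFieldNormedType.Exports.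
Local Open Scope ring_scope.
Local Open Scope classical_set_scope.

(* We argue by contradiction: assume rho(J) < 1 for the nonnegative matrix
   J = B^T diag(p(lambda_c)).
   1. Nonnegative matrices.  If A >= 0 and rho(A) < 1 then t - A is invertible
      for every t >= 1 (all eigenvalues have modulus < 1), and a continuity
      argument in t shows that t - A is even inverse-positive for t >= 1
      (it is for t large; the good t form a set closed from above and open
      downwards).  Hence v = (1 - A)^-1 1 is a strictly positive vector with
      A v < v componentwise.  Such a vector forbids any nonzero x >= 0 with
      x <= A x.
   2. Message passing.  x = 1 - Q(p) satisfies 0 <= x <= J(p) x, by a union
      bound on the fixed-point equation Q = F(Q; p).
   3. By continuity of p, J(p(lambda_n)) v < v for n large, so step 1 kills
      1 - Q(p(lambda_n)), i.e. Q(p(lambda_n)) = 1, contradicting the choice of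
      the sequence. *)

Section NonnegativeMatrix.
Variables (R : realType) (n : nat) (A : 'M[R]_n).
Hypothesis A_ge0 : forall i j, 0 <= A i j.

Definition mxv (y : 'I_n -> R) i := \sum_j A i j * y j.

Definition inverse_positive (t : R) := forall y : 'I_n -> R,
  (forall i, mxv y i <= t * y i) -> forall i, 0 <= y i.

Definition shift_onto (t : R) := forall c : 'I_n -> R,
  exists y : 'I_n -> R, forall i, t * y i - mxv y i = c i.

(* Sum of all entries: a crude bound on row sums, column sums and rho(A). *)
Definition total_mass := \sum_i \sum_j A i j.

Lemma total_mass_ge0 : 0 <= total_mass.
Proof. by apply: sumr_ge0 => i _; apply: sumr_ge0. Qed.

Lemma mxvDZ (y z : 'I_n -> R) (k : R) i :
  mxv (fun j => y j + k * z j) i = mxv y i + k * mxv z i.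
Proof.
rewrite /mxv big_distrr -big_split /=; apply: eq_bigr => j _.
by rewrite mulrDr mulrCA.
Qed.

Lemma mxv_ge0 (y : 'I_n -> R) i : (forall j, 0 <= y j) -> 0 <= mxv y i.
Proof. by move=> y_ge0; apply: sumr_ge0 => j _; apply: mulr_ge0. Qed.

(* For t beyond every row sum, a negative minimum of y cannot satisfy
   (t - A) y >= 0 at its argmin. *)
Lemma inverse_positive_large t : total_mass < t -> inverse_positive t.
Proof.
move=> mass_lt y Hy i; rewrite leNgt; apply/negP => yi_lt0.
have [m _ m_min] := arg_minP y (P:=predT) (i0:=i) isT.
have ym_lt0 : y m < 0 by apply: le_lt_trans (m_min i isT) yi_lt0.
have row_bound : (\sum_j A m j) * y m <= mxv y m.
  rewrite /mxv big_distrl /=; apply: ler_sum => j _.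
  by apply: ler_wpM2l => //; apply: m_min.
have row_le_mass : \sum_j A m j <= total_mass.
  rewrite /total_mass [X in _ <= X](bigD1 m) //= lerDl.
  by apply: sumr_ge0 => k _; apply: sumr_ge0.
have := Hy m; have := total_mass_ge0.
set s := \sum_j A m j in row_bound row_le_mass; nra.
Qed.

(* Closedness from above: if every s > t is good and t - A is onto, then t
   is good.  Perturb y by a small multiple of (t - A)^-1 1 and use s
   slightly larger than t. *)
Lemma inverse_positive_closed t :
  (forall s, t < s -> inverse_positive s) -> shift_onto t -> inverse_positive t.
Proof.
move=> good_above onto y Hy k; rewrite leNgt; apply/negP => yk_lt0.
have [v Hv] := onto (fun _ => 1).
have vk_norm_ge0 := normr_ge0 (v k).
pose e := - y k / (2 * (`|v k| + 1)).
have e_def : e * (2 * (`|v k| + 1)) = - y k by rewrite /e; field; lra.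
have e_gt0 : 0 < e by rewrite /e divr_gt0 //; lra.
pose M := \sum_i (`|y i| + e * `|v i|).
have term_ge0 i : 0 <= `|y i| + e * `|v i|.
  by apply: addr_ge0 => //; apply: mulr_ge0 => //; apply: ltW.
have M_ge0 : 0 <= M by apply: sumr_ge0 => i _.
pose d := e / (M + 1).
have d_def : d * (M + 1) = e by rewrite /d; field; lra.
have d_gt0 : 0 < d by rewrite /d divr_gt0 //; lra.
have : 0 <= y k + e * v k.
  apply: (good_above (t + d) _ (fun j => y j + e * v j)) => [|i]; first lra.
  rewrite mxvDZ; have Hyi := Hy i; have Hvi := Hv i.
  have z_le : `|y i + e * v i| <= M.
    apply: le_trans (ler_normD _ _) _.
    rewrite normrM (gtr0_norm e_gt0) /M (bigD1 i) //= lerDl.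
    by apply: sumr_ge0.
  have : - `|y i + e * v i| <= y i + e * v i by rewrite lerNl -normrN ler_norm.
  nra.
have : v k <= `|v k| by apply: ler_norm.
nra.
Qed.

(* Openness downwards: a good t > 0 with t - A onto has a whole interval
   (t - eta, t] of good values.  With v = (t - A)^-1 1 > 0 and
   u = (t - A)^-1 v <= K v, the minimum of y / v is controlled. *)
Lemma inverse_positive_open t : 0 < t -> shift_onto t -> inverse_positive t ->
  exists2 eta, 0 < eta & forall s, t - eta < s <= t -> inverse_positive s.
Proof.
move=> t_gt0 onto good_t.
have [v Hv] := onto (fun _ => 1).
have v_ge0 i : 0 <= v i by apply: good_t => j; have := Hv j; lra.
have v_gt0 i : 0 < v i.
  have : 1 <= t * v i by have := Hv i; have := mxv_ge0 i v_ge0; lra.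
  nra.
have [u Hu] := onto v.
have u_ge0 i : 0 <= u i by apply: good_t => j; have := Hu j; have := v_ge0 j; lra.
pose K := \sum_i u i / v i.
have K_ge0 : 0 <= K by apply: sumr_ge0 => i _; apply: divr_ge0.
have u_le i : u i <= K * v i.
  rewrite -ler_pdivrMr // /K (bigD1 i) //= lerDl.
  by apply: sumr_ge0 => j _; apply: divr_ge0.
exists (1 / (K + 1)); first by apply: divr_gt0; lra.
move=> s /andP[s_gt s_le] y Hy k; rewrite leNgt; apply/negP => yk_lt0.
have dK : (t - s) * (K + 1) < 1 by rewrite -ltr_pdivlMr; lra.
have [m _ m_min] := arg_minP (fun i => y i / v i) (P:=predT) (i0:=k) isT.
set th := y m / v m in m_min.
have th_lt0 : th < 0.
  by apply: le_lt_trans (m_min k isT) _; rewrite pmulr_llt0 // invr_gt0.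
have th_le i : th * v i <= y i by rewrite -ler_pdivlMr //; apply: m_min.
have ym : y m = th * v m by rewrite /th mulrVK // unitfE gt_eqF.
pose d := t - s; pose c := - (d * th).
have d_ge0 : 0 <= d by rewrite /d; lra.
have : 0 <= y m + c * u m.
  apply: (good_t (fun j => y j + c * u j)) => i; rewrite mxvDZ.
  have -> : mxv u i = t * u i - v i by have := Hu i; lra.
  have : d * (th * v i) <= d * y i by apply: ler_wpM2l => //; apply: th_le.
  have := Hy i; rewrite /c /d; nra.
rewrite ym /c => shifted_ge0.
have : v m <= d * u m by nra.
have := u_le m; have := v_gt0 m; rewrite /d; nra.
Qed.

(* If t - A is onto for every t >= 1, then 1 - A is inverse-positive:
   the supremum of the bad t >= 1 would be good by closedness, and then
   a whole interval below it would be good by openness. *)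
Lemma inverse_positive_one :
  (forall t, 1 <= t -> shift_onto t) -> inverse_positive 1.
Proof.
move=> onto; apply: contrapT => bad1.
pose S := [set t : R | 1 <= t /\ ~ inverse_positive t].
have ubS : ubound S total_mass.
  move=> t [t_ge1 bad_t]; rewrite leNgt; apply/negP => lt_t; apply: bad_t.
  exact: inverse_positive_large.
have hS : has_sup S by split; [exists 1; split | exists total_mass].
have sup_ge1 : 1 <= sup S by apply: sup_upper_bound => //; split.
have good_above s : sup S < s -> inverse_positive s.
  move=> lt_s; apply: contrapT => bad_s.
  have : s <= sup S by apply: sup_upper_bound => //; split => //; lra.
  lra.
have good_sup := inverse_positive_closed good_above (onto _ sup_ge1).
have [eta eta_gt0 good_near] :=
  inverse_positive_open (lt_le_trans ltr01 sup_ge1) (onto _ sup_ge1) good_sup.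
have [e [e_ge1 bad_e] lt_e] := sup_adherent eta_gt0 hS.
apply: (bad_e); apply: good_near; rewrite lt_e /=.
exact: sup_upper_bound hS _ (conj e_ge1 bad_e).
Qed.

(* A strictly positive vector v with A v < v forbids nonzero x >= 0 with
   x <= A x: compare x and v at the maximum of x / v. *)
Lemma subinvariant_vanishes (x v : 'I_n -> R) :
  (forall i, 0 <= x i) -> (forall i, x i <= mxv x i) ->
  (forall i, 0 < v i) -> (forall i, mxv v i < v i) -> forall i, x i = 0.
Proof.
move=> x_ge0 x_sub v_gt0 v_super i; apply/eqP.
rewrite eq_le x_ge0 andbT leNgt; apply/negP => xi_gt0.
have [m _ m_max] := arg_maxP (fun i => x i / v i) (P:=predT) (i0:=i) isT.
set th := x m / v m in m_max.
have th_gt0 : 0 < th by apply: lt_le_trans (m_max i isT); apply: divr_gt0.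
have x_le j : x j <= th * v j by rewrite -ler_pdivrMr //; apply: m_max.
have Ax_le : mxv x m <= th * mxv v m.
  rewrite /mxv big_distrr /=; apply: ler_sum => j _.
  by rewrite mulrCA; apply: ler_wpM2l.
have xm : x m = th * v m by rewrite /th mulrVK // unitfE gt_eqF.
have := x_sub m; have := v_super m; rewrite xm; nra.
Qed.

End NonnegativeMatrix.

Section SpectralRadius.
Variables (R : realType) (n : nat) (A : 'M[R]_n).
Hypothesis A_ge0 : forall i j, 0 <= A i j.
Local Notation toC := (real_complex R).
Local Notation normc := ComplexField.Normc.normc.
Local Open Scope complex_scope.

(* Every complex eigenvalue of A has modulus at most the largest column sum
   of A, hence at most total_mass A. *)
Lemma eigenvalue_norm_le (z : R[i]) :
  eigenvalue (map_mx toC A) z -> normc z <= total_mass A.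
Proof.
case/eigenvalueP => v Hv v_neq0.
have [j vj] : exists j, v 0 j != 0.
  apply/existsP; move: v_neq0; apply: contraR; rewrite negb_exists => /forallP H.
  by apply/eqP/matrixP => i k; rewrite ord1 mxE; apply/eqP/negPn/H.
have [m _ m_max] := arg_maxP (fun k => normc (v 0 k)) (P:=predT) (i0:=j) isT.
have normE (w : R[i]) : `|w| = (normc w)%:C by [].
have eig_m : z * v 0 m = \sum_i v 0 i * (A i m)%:C.
  have := congr1 (fun M : 'M[R[i]]_(1,n) => M 0 m) Hv; rewrite !mxE => <-.
  by apply: eq_bigr => i _; rewrite mxE.
have v_le_vm k : `|v 0 k| <= `|v 0 m| by rewrite !normE lecR; exact: m_max.
have vm_gt0 : 0 < `|v 0 m| by apply: lt_le_trans (v_le_vm j); rewrite normr_gt0.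
have : `|z| * `|v 0 m| <= `|v 0 m| * (\sum_i A i m)%:C.
  rewrite -normrM eig_m rmorph_sum big_distrr /=.
  apply: le_trans (ler_norm_sum _ _ _) _.
  apply: ler_sum => i _; rewrite normrM [`|(A i m)%:C|]ger0_norm ?ler0c //.
  by rewrite mulrC [X in _ <= X]mulrC; apply: ler_wpM2l; rewrite ?ler0c.
rewrite mulrC ler_pM2l // normE lecR => /le_trans; apply.
rewrite /total_mass [X in _ <= X]exchange_big /= [X in _ <= X](bigD1 m) //= lerDl.
by apply: sumr_ge0 => k _; apply: sumr_ge0.
Qed.

(* If rho(A) < 1 then no real t >= 1 is an eigenvalue, so t - A is onto. *)
Lemma shift_onto_of_spectral_radius :
  spectral_radius A < 1 -> forall t, 1 <= t -> shift_onto A t.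
Proof.
move=> rho_lt1 t t_ge1.
have [unit_tA|sing_tA] := boolP ((A - t%:M) \in unitmx).
  move=> c; pose Y := invmx (A - t%:M) *m \col_k (- c k).
  have HY : (A - t%:M) *m Y = \col_k (- c k) by rewrite mulmxA mulmxV // mul1mx.
  exists (fun i => Y i 0) => i.
  have := congr1 (fun M : 'M[R]_(n,1) => M i 0) HY.
  rewrite mulmxBl mul_scalar_mx !mxE /mxv.
  have -> : \sum_j A i j * Y j 0 = (A *m Y) i 0 by rewrite mxE.
  lra.
exfalso.
have eigC : eigenvalue (map_mx toC A) (toC t).
  by rewrite eigenvalue_map /eigenvalue /eigenspace kermx_eq0 row_free_unit.
have : normc (toC t) <= spectral_radius A.
  apply: sup_upper_bound; last by exists (toC t).
  split; first by exists (normc (toC t)), (toC t).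
  by exists (total_mass A) => r [z [eig_z ->]]; exact: eigenvalue_norm_le.
rewrite /= expr0n addr0 sqrtr_sqr ger0_norm; lra.
Qed.

(* Main linear-algebra consequence: rho(A) < 1 yields a strictly positive
   vector v with A v < v (namely v = (1 - A)^-1 1 >= 1). *)
Lemma strict_supersolution : spectral_radius A < 1 ->
  exists2 v : 'I_n -> R, forall i, 0 < v i & forall i, mxv A v i < v i.
Proof.
move=> rho_lt1; have onto := shift_onto_of_spectral_radius rho_lt1.
have [v Hv] := onto 1 (lexx _) (fun _ => 1).
have v_ge0 : forall i, 0 <= v i.
  by apply: inverse_positive_one => // i; have := Hv i; lra.
have v_ge1 i : 1 <= v i by have := Hv i; have := mxv_ge0 A_ge0 i v_ge0; lra.
by exists v => i; [have := v_ge1 i | have := Hv i]; lra.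
Qed.

End SpectralRadius.

Section MessagePassing.
Variables (V : finType) (E : {set V * V}) (R : realType) (p : 'I_#|E| -> R).
Hypothesis p_in01 : forall b, 0 <= p b <= 1.

(* b is a non-backtracking predecessor of a: b = k -> j and a = j -> i with
   k <> i.  These are the edges entering the product defining F_a. *)
Definition nb_pred (a b : 'I_#|E|) := (edst b == esrc a) && (esrc b != edst a).

Lemma jacE a b : jac p a b = (nb_pred a b)%:R * p b.
Proof. by rewrite /jac mul_mx_diag !mxE. Qed.

Lemma jac_ge0 a b : 0 <= jac p a b.
Proof. by rewrite jacE; apply: mulr_ge0; [case: nb_pred | case/andP: (p_in01 b)]. Qed.

Lemma factor_in01 (y : 'I_#|E| -> R) b :
  0 <= y b <= 1 -> 0 <= 1 - p b + p b * y b <= 1.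
Proof. by move: (p_in01 b) => /andP[? ?] /andP[? ?]; apply/andP; split; nra. Qed.

Lemma Fmap_in01 (y : 'I_#|E| -> R) :
  (forall b, 0 <= y b <= 1) -> forall a, 0 <= Fmap p y a <= 1.
Proof.
move=> y_in01 a; apply/andP; split.
  by apply: prodr_ge0 => b _; case/andP: (factor_in01 (y_in01 b)).
by apply: prodr_ile1 => b _; apply: factor_in01.
Qed.

Lemma Fmap_mono (y z : 'I_#|E| -> R) : (forall b, 0 <= y b <= 1) ->
  (forall b, y b <= z b) -> forall a, Fmap p y a <= Fmap p z a.
Proof.
move=> y_in01 y_le_z a; apply: ler_prod => b _.
case/andP: (factor_in01 (y_in01 b)) => -> _ /=.
by have := y_le_z b; case/andP: (p_in01 b) => ? ? ?; nra.
Qed.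

(* Union bound: 1 - prod_b (1 - p_b (1 - y_b)) <= sum_b p_b (1 - y_b),
   i.e. 1 - F(y) <= J (1 - y) componentwise. *)
Lemma Fmap_union_bound (y : 'I_#|E| -> R) : (forall b, 0 <= y b <= 1) ->
  forall a, 1 - Fmap p y a <= mxv (jac p) (fun b => 1 - y b) a.
Proof.
move=> y_in01 a.
have -> : mxv (jac p) (fun b => 1 - y b) a =
          \sum_(b | nb_pred a b) (p b * (1 - y b)).
  rewrite [RHS]big_mkcond /=; apply: eq_bigr => b _; rewrite jacE.
  by case: nb_pred; rewrite ?mul1r ?mul0r.
pose K (x s : R) := 0 <= x <= 1 /\ 1 - x <= s.
suff [] : K (\prod_(b < #|E| | nb_pred a b) (1 - p b + p b * y b))
            (\sum_(b | nb_pred a b) (p b * (1 - y b))) by [].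
apply: (big_ind2 K); rewrite /K.
- by split; lra.
- by move=> x1 x2 s1 s2 [/andP[? ?] ?] [/andP[? ?] ?]; split; [apply/andP; split|]; nra.
- by move=> b _; split; [exact: factor_in01 | lra].
Qed.

Definition iterF k := iter k (Fmap p) (fun _ => 0).

Lemma iterF_in01 k b : 0 <= iterF k b <= 1.
Proof.
elim: k b => [|k IH] b; first by rewrite /iterF /=; lra.
exact: Fmap_in01 IH b.
Qed.

Lemma iterF_mono : forall b, nondecreasing_seq (fun k => iterF k b).
Proof.
move=> b; apply/nondecreasing_seqP => k; elim: k b => [|k IH] b.
  by case/andP: (Fmap_in01 (iterF_in01 0) b).
exact: Fmap_mono (iterF_in01 k) IH b.
Qed.

Lemma iterF_cvg b : (fun k => iterF k b) @ \oo --> Qmp p b.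
Proof.
have ub : has_ubound (range (fun k => iterF k b)).
  by exists 1 => _ [k _ <-]; case/andP: (iterF_in01 k b).
have cv := nondecreasing_cvgn (iterF_mono b) ub.
by rewrite /Qmp -/(iterF _) (cvg_lim (@Rhausdorff R) cv).
Qed.

Lemma Qmp_le1 b : Qmp p b <= 1.
Proof.
rewrite -(cvg_lim (@Rhausdorff R) (iterF_cvg (b:=b))).
apply: limr_le; first exact: cvgP (iterF_cvg (b:=b)).
by near=> k; case/andP: (iterF_in01 k b).
Unshelve. all: by end_near.
Qed.

Lemma iterF_le_Qmp k b : iterF k b <= Qmp p b.
Proof. exact: nondecreasing_cvgn_le (iterF_mono b) (iterF_cvg (b:=b)) k. Qed.

(* Passing to the limit in the union bound: x = 1 - Q(p) satisfies
   x <= J(p) x. *)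
Lemma Qmp_union_bound a :
  1 - Qmp p a <= mxv (jac p) (fun b => 1 - Qmp p b) a.
Proof.
have cv : (fun k => mxv (jac p) (fun b => 1 - iterF k b) a) @ \oo -->
          mxv (jac p) (fun b => 1 - Qmp p b) a.
  rewrite /mxv; apply: cvg_big => [|b _]; first exact: add_continuous.
  by apply: cvgMl_tmp; apply: cvgB; [exact: cvg_cst | exact: iterF_cvg].
rewrite -(cvg_lim (@Rhausdorff R) cv).
apply: limr_ge; first exact: cvgP cv.
near=> k; apply: le_trans (Fmap_union_bound (iterF_in01 k) a).
have := iterF_le_Qmp k.+1 a; rewrite /iterF /=; lra.
Unshelve. all: by end_near.
Qed.

Lemma Qmp_eq1_of_supersolution (v : 'I_#|E| -> R) :
  (forall a, 0 < v a) -> (forall a, mxv (jac p) v a < v a) ->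
  Qmp p = (fun _ => 1).
Proof.
move=> v_gt0 v_super; apply: funext => a.
have x_ge0 b : 0 <= 1 - Qmp p b by have := Qmp_le1 b; lra.
have := subinvariant_vanishes jac_ge0 x_ge0 Qmp_union_bound v_gt0 v_super a.
lra.
Qed.

End MessagePassing.

Lemma supersolution_eventually (R : realType) (T : Type) (F : set_system T)
    {FF : Filter F} (n : nat) (M : T -> 'M[R]_n) (M0 : 'M[R]_n)
    (v : 'I_n -> R) :
  (forall a b, M x a b @[x --> F] --> M0 a b) ->
  (forall a, mxv M0 v a < v a) ->
  \forall x \near F, forall a, mxv (M x) v a < v a.
Proof.
move=> M_cvg v_super; apply: filter_forall => a.
have Mv_cvg : mxv (M x) v a @[x --> F] --> mxv M0 v a.
  apply: cvg_big => [|b _]; first exact: add_continuous.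
  by apply: cvgMr_tmp; exact: M_cvg.
exact: cvgr_lt Mv_cvg _ (v_super a).
Qed.

Lemma jac_cvg (V : finType) (E : {set V * V}) (R : realType) (T : Type)
    (F : set_system T) {FF : Filter F} (q : T -> 'I_#|E| -> R)
    (q0 : 'I_#|E| -> R) :
  (forall b, q x b @[x --> F] --> q0 b) ->
  forall a b, jac (q x) a b @[x --> F] --> jac q0 a b.
Proof.
move=> q_cvg a b; under eq_fun do rewrite jacE.
by rewrite jacE; apply: cvgMl_tmp; exact: q_cvg.
Qed.

Lemma within_continuous_seq (T U : topologicalType) (D : set T) (f : T -> U)
    (u : nat -> T) (x : T) :
  {within D, continuous f} -> D x -> (forall k, D (u k)) ->
  u @ \oo --> x -> f (u k) @[k --> \oo] --> f x.
Proof.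
move=> f_cont Dx Du u_cvg.
have u_within : u @ \oo --> within D (nbhs x).
  move=> P /u_cvg.
  exact: filterS (fun k (DP : D (u k) -> P (u k)) => DP (Du k)).
exact: cvg_comp u_within ((subspace_continuousP _ _).1 f_cont x Dx).
Qed.

Theorem lemma2 (V : finType) (E : {set V * V}) (R : realType)
  (p : R -> 'I_#|E| -> R) (lc : R) :
  (forall l, 0 <= l <= 1 -> forall a, 0 <= p l a <= 1) ->
  (forall a, {within [set l : R | 0 <= l <= 1], continuous (fun l => p l a)}) ->
  0 <= lc < 1 ->
  (forall a, (fun l => Qmp (p l) a) @ within [set l : R | 0 <= l <= 1] (lc^')
               --> (1 : R)) ->
  (exists u : nat -> R,
     (forall n, 0 <= u n <= 1) /\ u @ \oo --> lc /\
     (forall n, Qmp (p (u n)) <> (fun _ => 1))) ->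
  1 <= spectral_radius (jac (p lc)).
Proof.
move=> p_in01 p_cont lc_in _ [u [u_in01 [u_cvg Q_neq1]]].
rewrite leNgt; apply/negP => rho_lt1.
have lc_in01 : 0 <= lc <= 1 by case/andP: lc_in => -> /ltW.
have [v v_gt0 v_super] :=
  strict_supersolution (jac_ge0 (p_in01 lc lc_in01)) rho_lt1.
have p_cvg b : p (u k) b @[k --> \oo] --> p lc b.
  exact: within_continuous_seq (p_cont b) lc_in01 u_in01 u_cvg.
have [N _ super_near] := supersolution_eventually (jac_cvg p_cvg) v_super.
apply: (Q_neq1 N).
apply: (Qmp_eq1_of_supersolution (p_in01 _ (u_in01 N)) v_gt0).
exact: super_near N (leqnn N).
Qed.
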